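(* Let $(\eta_k)_{k\in\mathbb{N}}$ be independent identically distributed random variables with values in $\mathbb{N}$, $P(\eta_k=m)=p_m$ ($p_m\ge0$, $\sum_{m=1}^\infty p_m=1$), and let $$\eta=\sum_{k=1}^\infty\frac{(-1)^{k-1}}{\eta_1(\eta_1+\eta_2)\cdots(\eta_1+\eta_2+\dots+\eta_k)}.$$ Then: (1) if $p_i=1$ for some $i\in\mathbb{N}$, the distribution of $\eta$ is degenerate (concentrated at one point); (2) in all other cases the distribution of $\eta$ is purely singularly continuous (i.e. it has no atoms and is singular with respect to Lebesgue measure). *)

From HB Require Import structures.
From mathcomp Require Import all_boot all_order all_algebra.
From mathcomp Require Import all_classical all_reals all_analysis.
Set Implicit Arguments. Unset Strict Implicit. Unset Printing Implicit Defensive.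
Import Order.TTheory GRing.Theory Num.Theory numFieldNormedType.Exports.
Local Open Scope classical_set_scope.
Local Open Scope ring_scope.

(* Mutual independence of a sequence of N-valued random variables:
   for every finite set of distinct indices s and every family of
   (necessarily measurable, N carries the discrete sigma-algebra) sets A_k,
   P (/\_{k in s} {X_k in A_k}) = prod_{k in s} P {X_k in A_k}. *)
Definition mutually_independent_nat {d} {T : measurableType d} {R : realType}
  (P : probability T R) (X : nat -> T -> nat) : Prop :=
  forall (s : seq nat) (A : nat -> set nat), uniq s ->
    P (\bigcap_(k in [set` s]) (X k @^-1` A k)) =
    (\prod_(k <- s) P (X k @^-1` A k))%E.

(* The random variable
   eta = sum_{k>=1} (-1)^(k-1) / (eta_1 (eta_1+eta_2) ... (eta_1+...+eta_k)),
   written with 0-based indices: term k is (-1)^k / prod_{i<=k} (sum_{j<=i} X_j). *)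
Definition eta_series {T : Type} {R : realType} (X : nat -> T -> nat) (w : T) : R :=
  limn (fun n : nat => (\sum_(k < n) ((-1) ^+ k / \prod_(i < k.+1) ((\sum_(j < i.+1) X j w)%N)%:R) : R)).

From HB Require Import structures.
From mathcomp Require Import all_boot all_order all_algebra.
From mathcomp Require Import all_classical all_reals all_analysis.
From mathcomp Require Import ring lra zify.
Import Order.TTheory GRing.Theory Num.Theory numFieldNormedType.Exports.
Local Open Scope classical_set_scope.
Local Open Scope ring_scope.
Set Implicit Arguments. Unset Strict Implicit. Unset Printing Implicit Defensive.

(* Write d_k = eta_1 + ... + eta_k.  The series satisfies
   eta = (1 - eta') / d_1, where eta' is the same series built on the
   shifted sequence (eta_2, eta_3, ...) with denominators d_2, d_3, ...;
   consequently 1/(d_1 + 1) < eta < 1/d_1.  So eta determines d_1, then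
   eta' = 1 - d_1 eta determines d_2, and so on: eta is an injective
   function of the sequence (eta_k).  An atom of eta is therefore the event
   that every eta_k takes a prescribed value, of probability at most c^n for
   all n, where c = sup_m p_m < 1 when the law is not degenerate.
   For singularity fix m with p_m > 0.  The affine map x |-> 1 - d x
   scales Lebesgue measure by d, so the set of x whose n-th increment equals
   m has Lebesgue measure at most 1/(n+1).  Along the sparse indices
   n_j = (j+1)(j+2) these measures are summable, and Borel-Cantelli makes
   the upper limit of these sets Lebesgue-null; by independence,
   eta_{n_j} = m happens for infinitely many j almost surely. *)

Section InverseNat.
Context {R : realFieldType}.

Lemma invr_nat_ge0 k : 0 <= (k%:R : R)^-1.
Proof. by rewrite invr_ge0 ler0n. Qed.

Lemma invr_nat_le1 k : (0 < k)%N -> (k%:R : R)^-1 <= 1.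
Proof. by move=> k0; rewrite invf_le1 ?ler1n ?ltr0n. Qed.

Lemma ler_invr_nat k l : (0 < k)%N -> (k <= l)%N -> (l%:R : R)^-1 <= (k%:R)^-1.
Proof.
move=> k0 kl; rewrite lef_pV2 ?ler_nat // posrE ltr0n //.
exact: leq_trans kl.
Qed.

Lemma invr_nat_sub k : (0 < k)%N ->
  (k%:R : R)^-1 - (k.+1%:R)^-1 = ((k * k.+1)%N%:R)^-1.
Proof.
move=> k0; have k1 : (k%:R : R) != 0 by rewrite pnatr_eq0 -lt0n.
have k2 : (k.+1%:R : R) != 0 by rewrite pnatr_eq0.
by rewrite natrM; field; rewrite addrC natr1 k1 k2.
Qed.

End InverseNat.

Section EtaExpansion.
Context {R : realType}.
Implicit Types (a b : nat -> nat) (s c k n m : nat) (x : R).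

Definition pos_seq a := forall j, (0 < a j)%N.

Lemma pos_seq_tail a : pos_seq a -> pos_seq (fun j => a j.+1).
Proof. by move=> Ha j. Qed.

Lemma head_den_gt0 s a : pos_seq a -> (0 < s + a 0)%N.
Proof. by move=> Ha; rewrite addn_gt0 (Ha 0%N) orbT. Qed.

(* The offset [s] lets the series of the tail [fun j => a j.+1] be written
   in the same form, with offset [s + a 0]. *)
Definition eta_sum s a n : R :=
  \sum_(k < n) ((-1) ^+ k / \prod_(i < k.+1) ((s + \sum_(j < i.+1) a j)%N)%:R).

Definition eta_val s a : R := limn (eta_sum s a).

Lemma eta_seriesE T (X : nat -> T -> nat) w :
  eta_series X w = eta_val 0 (fun j => X j w) :> R.
Proof. by []. Qed.

Lemma eta_sum0 s a : eta_sum s a 0%N = 0.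
Proof. by rewrite /eta_sum big_ord0. Qed.

Lemma eta_sumS s a n : eta_sum s a n.+1 =
  (1 - eta_sum (s + a 0)%N (fun j => a j.+1) n) / (s + a 0)%N%:R.
Proof.
rewrite /eta_sum big_ord_recl /= big_ord1 big_ord1 expr0 mulrBl div1r.
congr (_ + _); rewrite -mulNr -sumrN mulr_suml; apply: eq_bigr => k _.
rewrite /bump /= add1n big_ord_recl /= big_ord1.
have -> : \prod_(i < k.+1) ((s + \sum_(j < (lift ord0 i).+1) a j)%N)%:R
   = \prod_(i < k.+1) ((s + a 0 + \sum_(j < i.+1) a j.+1)%N)%:R :> R.
  by apply: eq_bigr => i _; rewrite /= big_ord_recl /= addnA.
by rewrite exprS invfM; ring.
Qed.

Lemma eta_sum_bounds s a n : pos_seq a ->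
  0 <= eta_sum s a n /\ eta_sum s a n <= ((s + a 0)%N%:R)^-1.
Proof.
elim: n s a => [|n IH] s a Ha; first by rewrite eta_sum0 lexx invr_nat_ge0.
rewrite eta_sumS; have [h0 h1] := IH (s + a 0)%N _ (pos_seq_tail Ha).
have tail_le1 : eta_sum (s + a 0)%N (fun j => a j.+1) n <= 1.
  by apply: (le_trans h1); apply: invr_nat_le1; rewrite addn_gt0 (Ha 1%N) orbT.
split; first by apply: mulr_ge0; [rewrite subr_ge0 | exact: invr_nat_ge0].
rewrite -[X in _ <= X]mul1r; apply: ler_wpM2r; first exact: invr_nat_ge0.
by rewrite lerBlDr lerDl.
Qed.

Lemma eta_sum_le1 s a n : pos_seq a -> eta_sum s a n <= 1.
Proof.
move=> Ha; have [_ h] := eta_sum_bounds s n Ha.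
apply: (le_trans h); exact: invr_nat_le1 (head_den_gt0 s Ha).
Qed.

Lemma eta_sumSB s a m n :
  eta_sum s a m.+1 - eta_sum s a n.+1 =
  (eta_sum (s + a 0)%N (fun j => a j.+1) n - eta_sum (s + a 0)%N (fun j => a j.+1) m)
   * ((s + a 0)%N%:R)^-1.
Proof. by rewrite !eta_sumS; ring. Qed.

Lemma eta_sum_cauchy_pos n s a m : (0 < s)%N -> pos_seq a -> (n <= m)%N ->
  `|eta_sum s a m - eta_sum s a n| <= (2 ^+ n)^-1.
Proof.
elim: n s a m => [|n IH] s a m s0 Ha nm.
  rewrite eta_sum0 subr0 expr0 invr1 ger0_norm; last by case: (eta_sum_bounds s m Ha).
  exact: eta_sum_le1.
case: m nm => [//|m] nm.
rewrite eta_sumSB normrM (ger0_norm (invr_nat_ge0 _)).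
rewrite exprS invfM [X in _ <= X]mulrC; apply: ler_pM.
- exact: normr_ge0.
- exact: invr_nat_ge0.
- by rewrite distrC; apply: IH (pos_seq_tail Ha) _; rewrite ?addn_gt0 ?s0.
- by apply: (@ler_invr_nat _ 2) => //; exact: leq_add s0 (Ha 0%N).
Qed.

Lemma eta_sum_cauchy n s a m : pos_seq a -> (n <= m)%N ->
  `|eta_sum s a m - eta_sum s a n| <= 2 * (2 ^+ n)^-1.
Proof.
move=> Ha; case: n => [|n] nm.
  rewrite eta_sum0 subr0 expr0 invr1 ger0_norm; last by case: (eta_sum_bounds s m Ha).
  by apply: (le_trans (eta_sum_le1 s m Ha)); rewrite mulr1 ler1n.
case: m nm => [//|m] nm.
rewrite eta_sumSB normrM (ger0_norm (invr_nat_ge0 _)).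
rewrite exprS invfM mulrA mulfV ?mul1r // -[X in _ <= X]mulr1; apply: ler_pM.
- exact: normr_ge0.
- exact: invr_nat_ge0.
- by rewrite distrC; apply: eta_sum_cauchy_pos (pos_seq_tail Ha) _ => //;
    exact: head_den_gt0.
- exact: invr_nat_le1 (head_den_gt0 s Ha).
Qed.

Lemma exists_two_expr_lt (e : R) : 0 < e -> exists N, 2 * (2 ^+ N)^-1 < e.
Proof.
move=> e0; have /archi_boundP hb : 0 <= 2 / e by rewrite divr_ge0 // ltW.
exists (Num.Def.archi_bound (2 / e)).
set N := Num.Def.archi_bound (2 / e) in hb *.
have hN : (N%:R : R) <= 2 ^+ N by rewrite -natrX ler_nat ltnW // ltn_expl.
have : 2 / e < 2 ^+ N by exact: lt_le_trans hb hN.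
by rewrite ltr_pdivrMr // => h; rewrite ltr_pdivrMr ?exprn_gt0 // mulrC.
Qed.

Lemma eta_sum_cvg s a : pos_seq a -> cvgn (eta_sum s a).
Proof.
move=> Ha; apply/cauchy_cvgP/cauchyP => e e0.
have [N HN] := exists_two_expr_lt e0.
exists (eta_sum s a N); exists N => // n /= Nn.
rewrite /ball /= distrC; exact: le_lt_trans (eta_sum_cauchy _ Ha Nn) HN.
Qed.

Lemma eta_val_le s a : pos_seq a -> eta_val s a <= ((s + a 0)%N%:R)^-1.
Proof.
move=> Ha; apply: limr_le; first exact: eta_sum_cvg.
by apply: nearW => n; case: (eta_sum_bounds s n Ha).
Qed.

Lemma eta_valE s a : pos_seq a ->
  eta_val s a = (1 - eta_val (s + a 0)%N (fun j => a j.+1)) / (s + a 0)%N%:R.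
Proof.
move=> Ha; apply: cvg_lim => //; rewrite -cvg_shiftS /=.
under eq_fun do rewrite eta_sumS.
apply: cvgM; last exact: cvg_cst.
by apply: cvgB; [exact: cvg_cst | exact: eta_sum_cvg (pos_seq_tail Ha)].
Qed.

Definition shift_map c x : R := 1 - c%:R * x.

Lemma eta_val_tail s a : pos_seq a ->
  eta_val (s + a 0)%N (fun j => a j.+1) = shift_map (s + a 0)%N (eta_val s a).
Proof.
move=> Ha; rewrite /shift_map [in RHS](eta_valE s Ha).
have c0 : (s + a 0)%N%:R != 0 :> R by rewrite pnatr_eq0 -lt0n head_den_gt0.
by rewrite mulrCA mulfV // mulr1 opprB addrC subrK.
Qed.

Lemma eta_val_gt0 s a : pos_seq a -> 0 < eta_val s a.
Proof.
move=> Ha; rewrite (eta_valE s Ha) divr_gt0 ?ltr0n ?head_den_gt0 // subr_gt0.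
have h := eta_val_le (s + a 0)%N (pos_seq_tail Ha).
have hd : (1 < s + a 0 + a 1)%N by have := Ha 0%N; have := Ha 1%N; lia.
by apply: le_lt_trans h _; rewrite invf_lt1 ?ltr0n ?ltr1n ?(ltnW hd).
Qed.

Definition digit_itv c : interval R := `](c%:R + 1)^-1, (c%:R)^-1[.

Lemma digit_itv_inj x c c' : x \in digit_itv c -> x \in digit_itv c' -> c = c'.
Proof.
have key u v : (u < v)%N -> x \in digit_itv u -> x \in digit_itv v -> False.
  move=> uv; rewrite /digit_itv !in_itv /= => /andP[hu _] /andP[_ hv].
  have : (v%:R : R)^-1 <= (u%:R + 1)^-1 by rewrite natr1; exact: ler_invr_nat.
  by move=> /(lt_le_trans hv) /(lt_trans hu); rewrite ltxx.
by move=> hc hc'; case: (ltngtP c c') => // h; [case: (key _ _ h hc hc') |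
  case: (key _ _ h hc' hc)].
Qed.

Lemma eta_val_lt s a : pos_seq a -> eta_val s a < ((s + a 0)%N%:R)^-1.
Proof.
move=> Ha; rewrite (eta_valE s Ha) -[X in _ < X]mul1r.
rewrite ltr_pM2r ?invr_gt0 ?ltr0n ?head_den_gt0 // gtrDl oppr_lt0.
exact/eta_val_gt0/pos_seq_tail.
Qed.

Lemma eta_val_itv s a : pos_seq a -> eta_val s a \in digit_itv (s + a 0)%N.
Proof.
move=> Ha; have Ht := pos_seq_tail Ha.
have c0 : 0 < (s + a 0)%N%:R :> R by rewrite ltr0n head_den_gt0.
have tail_lt : eta_val (s + a 0)%N (fun j => a j.+1) < ((s + a 0)%N%:R + 1)^-1.
  apply: lt_le_trans (eta_val_lt _ Ht) _; rewrite natr1.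
  by apply: ler_invr_nat => //; have := Ha 1%N; lia.
rewrite /digit_itv in_itv /= eta_val_lt // andbT (eta_valE s Ha) ltr_pdivlMr //.
have c1 : (s + a 0)%N%:R + 1 != 0 :> R by rewrite gt_eqF // addr_gt0.
have -> : ((s + a 0)%N%:R + 1)^-1 * (s + a 0)%N%:R = 1 - ((s + a 0)%N%:R + 1)^-1 :> R.
  by field.
lra.
Qed.

Lemma eta_val_inj_head s a b : pos_seq a -> pos_seq b ->
  eta_val s a = eta_val s b -> a 0%N = b 0%N.
Proof.
move=> Ha Hb E; apply/eqP; rewrite -(eqn_add2l s); apply/eqP.
apply: (digit_itv_inj (eta_val_itv s Ha)); rewrite E; exact: eta_val_itv.
Qed.

Lemma eta_val_inj s a b : pos_seq a -> pos_seq b ->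
  eta_val s a = eta_val s b -> forall j, a j = b j.
Proof.
move=> Ha Hb E j; elim: j s a b Ha Hb E => [|j IH] s a b Ha Hb E.
  exact: eta_val_inj_head Ha Hb E.
have h0 := eta_val_inj_head Ha Hb E.
apply: (IH (s + a 0)%N _ _ (pos_seq_tail Ha) (pos_seq_tail Hb)).
by rewrite (eta_val_tail s Ha) {2}h0 (eta_val_tail s Hb) E h0.
Qed.

End EtaExpansion.

Section DigitSets.
Context {R : realType}.
Implicit Types (a : nat -> nat) (s c k n m : nat) (Y : set R).
Local Notation mu := (@lebesgue_measure R).

Lemma measurable_shift_map c :
  @measurable_fun _ _ (measurableTypeR R) (measurableTypeR R) setT (shift_map c).
Proof.
have -> : shift_map c = cst 1 \- cst c%:R \* id :> (R -> R) by [].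
exact/measurable_realfun.measurable_funB/measurable_realfun.measurable_funM.
Qed.

Lemma measurable_shift_map_preimage c Y :
  measurable Y -> measurable (shift_map c @^-1` Y).
Proof. by move=> mY; rewrite -[X in measurable X]setTI; exact: measurable_shift_map. Qed.

Lemma lebesgue_shift_map_itv c (a b : R) : (0 < c)%N ->
  mu `]a, b] = ((c%:R : R)%:E * mu (shift_map c @^-1` `]a, b]))%E.
Proof.
move=> c0; have k0 : 0 < (c%:R : R) by rewrite ltr0n.
have -> : shift_map c @^-1` `]a, b] = `[(1 - b) / c%:R, (1 - a) / c%:R[%classic.
  apply/seteqP; split => x /=; rewrite !in_itv /= /shift_map => /andP[h1 h2];
    apply/andP; split.
  - by rewrite ler_pdivrMr //; lra.
  - by rewrite ltr_pdivlMr //; lra.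
  - by move: h2; rewrite ltr_pdivlMr //; lra.
  - by move: h1; rewrite ler_pdivrMr //; lra.
rewrite !lebesgue_measure_itv /= !lte_fin ltr_pM2r ?invr_gt0 // ltrD2l ltrN2.
case: ifP => _; last by rewrite mule0.
by rewrite -!EFinD -EFinM; congr (_%:E); field; rewrite gt_eqF.
Qed.

(* The measure instance of [pushforward mu (shift_map c)] takes the
   measurability proof as an argument, so it must be named explicitly. *)
Let shift_pushforward c :=
  measure_function_pushforward__canonical__measure_function_Measure mu
    (measurable_shift_map c).

Lemma lebesgue_shift_map c Y : (0 < c)%N -> measurable Y ->
  mu (shift_map c @^-1` Y) = (((c%:R : R)^-1)%:E * mu Y)%E.
Proof.
move=> c0 mY.
have -> : mu Y = mscale (c%:R : R)%:nng (shift_pushforward c) Y.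
  by apply: lebesgue_measure_unique mY => _ [[a b] _ <-]; exact: lebesgue_shift_map_itv.
rewrite /mscale /= muleA -EFinM mulVf ?mul1e //.
by rewrite pnatr_eq0 -lt0n.
Qed.

Definition cylinder c Y : set R := [set` digit_itv c] `&` shift_map c @^-1` Y.

Lemma measurable_cylinder c Y : measurable Y -> measurable (cylinder c Y).
Proof.
by move=> mY; apply: measurableI; [exact: measurable_itv | exact: measurable_shift_map_preimage].
Qed.

Lemma lebesgue_cylinder_le c Y : (0 < c)%N -> measurable Y ->
  (mu (cylinder c Y) <= ((c%:R : R)^-1)%:E * mu Y)%E.
Proof.
move=> c0 mY; rewrite -lebesgue_shift_map //; apply: le_measure => //.
- by rewrite inE; exact: measurable_cylinder.
- by rewrite inE; exact: measurable_shift_map_preimage.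
- by move=> x [].
Qed.

Lemma lebesgue_cylinderT c : (0 < c)%N ->
  (mu (cylinder c setT) <= (((c * c.+1)%N%:R : R)^-1)%:E)%E.
Proof.
move=> c0; apply: (@le_trans _ _ (mu [set` digit_itv c])).
  apply: le_measure; rewrite ?inE; [exact: measurable_cylinder | exact: measurable_itv|].
  by move=> x [].
rewrite lebesgue_measure_itv /= lte_fin natr1 ltf_pV2 ?posrE ?ltr0n //.
by rewrite ltr_nat ltnSn -EFinD invr_nat_sub.
Qed.

Lemma cylinder_eta_val Y s a : pos_seq a ->
  cylinder (s + a 0)%N Y (eta_val s a) <-> Y (eta_val (s + a 0)%N (fun j => a j.+1)).
Proof.
move=> Ha; rewrite eta_val_tail //.
by split => [[]|h] //; split => //; exact: eta_val_itv.
Qed.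

Lemma cylinder_digit c Y s a : pos_seq a -> cylinder c Y (eta_val s a) -> c = (s + a 0)%N.
Proof. by move=> Ha [h _]; exact: digit_itv_inj h (eta_val_itv s Ha). Qed.

(* The set of [eta_val s a] with [a n = m] (see [digit_setP]), built by
   recursion on [n] over the possible first increments [d.+1]. *)
Fixpoint digit_set m n s : set R :=
  match n with
  | 0 => cylinder (s + m)%N setT
  | n'.+1 => \bigcup_d cylinder (s + d.+1)%N (digit_set m n' (s + d.+1)%N)
  end.

Lemma measurable_digit_set m n s : measurable (digit_set m n s).
Proof.
elim: n s => [|n IH] s /=; first exact: measurable_cylinder.
by apply: bigcupT_measurable => d; exact: measurable_cylinder.
Qed.

Lemma digit_setP m n s a : pos_seq a -> digit_set m n s (eta_val s a) <-> a n = m.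
Proof.
elim: n s a => [|n IH] s a Ha /=.
  split => [/(cylinder_digit Ha) /eqP|<-]; first by rewrite eqn_add2l => /eqP.
  exact/cylinder_eta_val.
split => [[d _ hd]|h].
  have e := cylinder_digit Ha hd; rewrite e cylinder_eta_val // in hd.
  exact: (IH _ _ (pos_seq_tail Ha)).1 hd.
exists (a 0%N).-1 => //; rewrite prednK ?(Ha 0%N) // cylinder_eta_val //.
exact: (IH _ _ (pos_seq_tail Ha)).2.
Qed.

Lemma nneseries_inv_consecutive_le s (K : R) : 0 <= K ->
  (\sum_(0 <= d <oo) ((K * (((s + d.+1) * (s + d.+1).+1)%N%:R)^-1))%:E
    <= (K * (s.+1%:R)^-1)%:E)%E.
Proof.
move=> K0; apply: lime_le.
  by apply: is_cvg_nneseries => n _ _; rewrite lee_fin mulr_ge0 ?invr_nat_ge0.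
apply: nearW => N; rewrite sumEFin lee_fin -mulr_sumr ler_wpM2l //.
rewrite (@telescope_sumr_eq _ 0 N (fun k => - ((s + k).+1%:R : R)^-1)) //.
  by rewrite addn0 opprK addrC lerBlDr lerDl invr_nat_ge0.
by move=> k _; rewrite !addnS opprK addrC invr_nat_sub.
Qed.

Lemma lebesgue_digit_set m n s : (0 < m)%N ->
  (mu (digit_set m n s) <= ((((s + n).+1 * s.+1)%N%:R : R)^-1)%:E)%E.
Proof.
move=> m0; elim: n s => [|n IH] s /=.
  apply: le_trans (lebesgue_cylinderT _) _; first by rewrite addn_gt0 m0 orbT.
  by rewrite lee_fin addn0 ler_invr_nat ?muln_gt0 //; nia.
apply: (le_trans (measure_sigma_subadditive _ _ _ (@subset_refl _ _))).
- by move=> d; apply: measurable_cylinder; exact: measurable_digit_set.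
- by apply: bigcupT_measurable => d; apply: measurable_cylinder; exact: measurable_digit_set.
set K := ((s + n.+1).+1%:R : R)^-1.
rewrite natrM invfM -/K; apply: le_trans (nneseries_inv_consecutive_le s (invr_nat_ge0 _)).
apply: lee_nneseries => [d _ _|d _]; first exact: measure_ge0.
have cd : (0 < s + d.+1)%N by rewrite addnS.
apply: le_trans (lebesgue_cylinder_le cd (measurable_digit_set _ _ _)) _.
apply: le_trans (lee_wpmul2l _ (IH _)) _; first by rewrite lee_fin invr_nat_ge0.
rewrite -EFinM lee_fin !natrM !invfM mulrCA ler_wpM2r ?mulr_ge0 ?invr_nat_ge0 //.
by rewrite ler_invr_nat //; lia.
Qed.

(* [digit_set m n 0] has measure about [1/n], which is not summable in [n];
   along the quadratically growing indices it is. *)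
Definition sparse_index j := (j.+1 * j.+2)%N.

Lemma sparse_index_inj : injective sparse_index.
Proof. by move=> i j; rewrite /sparse_index => e; nia. Qed.

Lemma lebesgue_lim_sup_digit_set m : (0 < m)%N ->
  mu (lim_sup_set (fun j => digit_set m (sparse_index j) 0)) = 0%E.
Proof.
move=> m0; apply: lim_sup_set_cvg0 => [j|]; first exact: measurable_digit_set.
apply: le_lt_trans (le_trans _ (nneseries_inv_consecutive_le 0 (@ler01 R))) _;
  last by rewrite ltry.
apply: lee_nneseries => [j _ _|j _]; first exact: measure_ge0.
apply: le_trans (lebesgue_digit_set _ _ m0) _.
by rewrite lee_fin mul1r ler_invr_nat ?muln_gt0 // /sparse_index; nia.
Qed.

End DigitSets.

Lemma ereal_le_expr_eq0 (R : realType) (e : \bar R) (r : R) :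
  (0 <= e)%E -> 0 <= r -> r < 1 -> (forall k, (e <= (r ^+ k)%:E)%E) -> e = 0%E.
Proof.
move=> e0 r0 r1 he; case: e e0 he => [x| |] // x0 he; last by have := he 0%N.
have r_cvg : (r ^+ k) @[k --> \oo] --> 0 by apply: cvg_expr; rewrite ger0_norm.
congr (_%:E); apply/eqP; rewrite eq_le; apply/andP; split; last by rewrite -lee_fin.
rewrite -(cvg_lim _ r_cvg) //; apply: limr_ge; first by apply/cvg_ex; exists 0.
by apply: nearW => k; rewrite -lee_fin.
Qed.

Section ProbabilityOne.
Context d (T : measurableType d) (R : realType) (P : probability T R).

Lemma probability_setC_eq0 (A : set T) : measurable A -> P (~` A) = 0%E -> P A = 1%E.
Proof.
move=> mA; rewrite probability_setC //.
have : (0 <= P A <= 1)%E by rewrite measure_ge0 probability_le1.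
case: (P A) => [x| |] //= /andP[_ x1] /eqP.
by rewrite -EFinB eqe subr_eq0 => /eqP <-.
Qed.

Lemma probability_bigcap_eq1 (E : nat -> set T) : (forall n, measurable (E n)) ->
  (forall n, P (E n) = 1%E) -> P (\bigcap_n E n) = 1%E.
Proof.
move=> mE hE; apply: probability_setC_eq0; first exact: bigcapT_measurable.
apply/eqP; rewrite eq_le measure_ge0 andbT setC_bigcap.
apply: le_trans (measure_sigma_subadditive _ _ _ (@subset_refl _ _)) _.
- by move=> n; exact: measurableC.
- by apply: bigcupT_measurable => n; exact: measurableC.
by rewrite eseries0 // => n _ _; apply: etrans (probability_setC P (mE n)) _; rewrite hE subee.
Qed.

End ProbabilityOne.

Section EtaLaw.
Context d (T : measurableType d) (R : realType) (P : probability T R).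
Variables (X : nat -> T -> nat) (p : nat -> R).
Hypothesis HXmeas : forall k, measurable_fun setT (X k).
Hypothesis HXpos : forall k w, (0 < X k w)%N.
Hypothesis Hlaw : forall k m, (0 < m)%N -> P (X k @^-1` [set m]) = (p m)%:E.
Hypothesis Hind : mutually_independent_nat P X.

Lemma measurable_preimage_X k (A : set nat) : measurable (X k @^-1` A).
Proof. by rewrite -[X in measurable X]setTI; exact: HXmeas. Qed.

Lemma pos_seq_X w : pos_seq (fun j => X j w).
Proof. by move=> j; exact: HXpos. Qed.

Lemma p_le1 m : (0 < m)%N -> p m <= 1.
Proof.
move=> m0; rewrite -lee_fin -(Hlaw 0 m0).
by apply: probability_le1; exact: measurable_preimage_X.
Qed.

Lemma p_add_le1 m m' : (0 < m)%N -> (0 < m')%N -> m != m' -> p m + p m' <= 1.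
Proof.
move=> m0 m'0 mm'; rewrite -lee_fin EFinD -(Hlaw 0 m0) -(Hlaw 0 m'0) -measureU.
- by apply: probability_le1; apply: measurableU; exact: measurable_preimage_X.
- exact: measurable_preimage_X.
- exact: measurable_preimage_X.
by apply/seteqP; split => w //= [h1 h2]; move: mm'; rewrite -h1 h2 eqxx.
Qed.

Lemma exists_p_bound_lt1 : ~ (exists i, (0 < i)%N /\ p i = 1) ->
  exists c : R, [/\ 0 <= c, c < 1 & forall m, (0 < m)%N -> p m <= c].
Proof.
move=> hn.
have [[i [i0 pi]]|small] := pselect (exists i, (0 < i)%N /\ 2^-1 < p i).
  exists (p i); split; first by apply: le_trans (ltW pi).
    by rewrite lt_neqAle p_le1 // andbT; apply/eqP => e; apply: hn; exists i.
  move=> m m0; case: (eqVneq m i) => [-> //|ne].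
  by have := p_add_le1 m0 i0 ne; lra.
exists 2^-1; split; rewrite ?invr_ge0 ?invf_lt1 ?ltr1n //.
by move=> m m0; rewrite leNgt; apply/negP => h; apply: small; exists m.
Qed.

Lemma probability_le_indep (E : set T) (s : seq nat) (A : nat -> set nat) (c : R) :
  uniq s -> measurable E -> E `<=` \bigcap_(k in [set` s]) X k @^-1` A k ->
  (forall k, P (X k @^-1` A k) <= c%:E)%E -> (P E <= (c ^+ size s)%:E)%E.
Proof.
move=> us mE EA hc.
apply: (@le_trans _ _ (P (\bigcap_(k in [set` s]) X k @^-1` A k))).
  apply: le_measure EA; rewrite inE //.
  by apply: bigcap_measurableType => k _; exact: measurable_preimage_X.
rewrite Hind //; elim: s {us EA} => [|k s IH]; first by rewrite big_nil.
by rewrite big_cons exprS EFinM lee_pmul ?prode_ge0.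
Qed.

Lemma preimage_eta_series_point a : pos_seq a ->
  eta_series X @^-1` [set eta_val 0 a :> R] = \bigcap_k X k @^-1` [set a k].
Proof.
move=> Ha; apply/seteqP; split => w /=; rewrite eta_seriesE.
  by move=> hw k _; exact: eta_val_inj (pos_seq_X w) Ha hw k.
by move=> hw; congr eta_val; apply/funext => j; exact: hw j I.
Qed.

Lemma preimage_eta_series_digit_set m n :
  eta_series X @^-1` (digit_set m n 0 : set R) = X n @^-1` [set m].
Proof.
by apply/seteqP; split => w /=; rewrite eta_seriesE (digit_setP _ _ _ (pos_seq_X w)).
Qed.

Lemma eta_series_degenerate i : (0 < i)%N -> p i = 1 ->
  P (eta_series X @^-1` [set eta_val 0 (fun=> i) :> R]) = 1%E.
Proof.
move=> i0 pi; rewrite preimage_eta_series_point //.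
apply: probability_bigcap_eq1 => k; first exact: measurable_preimage_X.
by rewrite Hlaw // pi.
Qed.

Lemma eta_series_no_atom (c : R) : 0 <= c -> c < 1 ->
  (forall m, (0 < m)%N -> p m <= c) ->
  forall x : R, P (eta_series X @^-1` [set x]) = 0%E.
Proof.
move=> c0 c1 hc x.
have [[w0 <-]|nox] := pselect (exists w0, eta_series X w0 = x); last first.
  rewrite (_ : _ @^-1` _ = set0) ?measure0 //.
  by apply/seteqP; split => w //= hw; apply: nox; exists w.
rewrite eta_seriesE preimage_eta_series_point ?pos_seq_X //.
apply: (ereal_le_expr_eq0 (measure_ge0 _ _) c0 c1) => n.
rewrite -(size_iota 0 n); apply: probability_le_indep (iota_uniq 0 n) _ _ _.
- by apply: bigcapT_measurable => k; exact: measurable_preimage_X.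
- by move=> w hw k _; exact: hw k I.
- by move=> k; rewrite Hlaw // lee_fin hc.
Qed.

Lemma probability_bigcup_sparse_eq1 m n : (0 < m)%N -> 0 < p m ->
  P (\bigcup_(j >= n) X (sparse_index j) @^-1` [set m]) = 1%E.
Proof.
move=> m0 pm; apply: probability_setC_eq0.
  by apply: bigcup_measurable => j _; exact: measurable_preimage_X.
apply: (ereal_le_expr_eq0 (measure_ge0 _ _) _ _ (r := 1 - p m)) => [||K].
- by rewrite subr_ge0 p_le1.
- by rewrite ltrBlDr ltrDl.
have uq : uniq (map sparse_index (iota n K)).
  by rewrite map_inj_uniq ?iota_uniq //; exact: sparse_index_inj.
rewrite -[in (_ ^+ K)](size_iota n K) -(size_map sparse_index).
apply: (probability_le_indep (A := fun=> ~` [set m]) uq).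
- by apply/measurableC/bigcup_measurable => j _; exact: measurable_preimage_X.
- move=> w hw k /= /mapP[j jn ->] hx; apply: hw; exists j => //=.
  by rewrite mem_iota in jn; case/andP: jn.
- move=> k; rewrite -preimage_setC probability_setC; last exact: measurable_preimage_X.
  by rewrite Hlaw // EFinB.
Qed.

Lemma eta_series_singular m : (0 < m)%N -> 0 < p m ->
  P (eta_series X @^-1` lim_sup_set (fun j => digit_set m (sparse_index j) 0 : set R))
  = 1%E.
Proof.
move=> m0 pm; rewrite /lim_sup_set preimage_bigcap.
apply: probability_bigcap_eq1 => n; rewrite preimage_bigcup.
  by apply: bigcup_measurable => j _; rewrite preimage_eta_series_digit_set;
    exact: measurable_preimage_X.
under eq_bigcupr do rewrite preimage_eta_series_digit_set.
exact: probability_bigcup_sparse_eq1.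
Qed.

End EtaLaw.

Lemma exists_pos_of_sum_cvg1 (R : realType) (p : nat -> R) : (forall m, 0 <= p m) ->
  (fun n : nat => \sum_(1 <= m < n) p m : R) @ \oo --> (1 : R) ->
  exists m, (0 < m)%N /\ 0 < p m.
Proof.
move=> p0 hs; apply: contrapT => hn.
have e : (fun n : nat => \sum_(1 <= m < n) p m : R) = fun=> 0.
  apply/funext => n; rewrite big_nat big1 // => m /andP[m0 _].
  by apply/eqP; rewrite eq_le p0 andbT leNgt; apply/negP => h; apply: hn; exists m.
have : limn (fun=> 0 : R) = 1 by rewrite -e; exact: cvg_lim.
by rewrite lim_cst // => /esym/eqP; rewrite oner_eq0.
Qed.

Theorem theorem5 (d : measure_display) (T : measurableType d) (R : realType)
  (P : probability T R) (X : nat -> T -> nat) (p : nat -> R)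
  (HXmeas : forall k, measurable_fun setT (X k))
  (HXpos : forall k w, (0 < X k w)%N)
  (Hp0 : forall m, 0 <= p m)
  (Hpsum : (fun n : nat => \sum_(1 <= m < n) p m : R) @ \oo --> (1 : R))
  (Hlaw : forall k m, (0 < m)%N -> P (X k @^-1` [set m]) = (p m)%:E)
  (Hind : mutually_independent_nat P X) :
  ((exists i, (0 < i)%N /\ p i = 1) ->
     exists c : R, P (eta_series X @^-1` [set c]) = 1%E)
  /\
  (~ (exists i, (0 < i)%N /\ p i = 1) ->
     (forall x : R, P (eta_series X @^-1` [set x]) = 0%E) /\
     (exists N : set R, measurable N /\ (lebesgue_measure N = 0)%E /\
        P (eta_series X @^-1` N) = 1%E)).
Proof.
split=> [[i [i0 pi]]|hn].
  by exists (eta_val 0 (fun=> i)); exact: (eta_series_degenerate HXmeas HXpos Hlaw i0 pi).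
split.
  have [c [c0 c1 hc]] := exists_p_bound_lt1 HXmeas Hlaw hn.
  exact: (eta_series_no_atom HXmeas HXpos Hlaw Hind c0 c1 hc).
have [m [m0 pm]] := exists_pos_of_sum_cvg1 Hp0 Hpsum.
exists (lim_sup_set (fun j => digit_set m (sparse_index j) 0)); split.
  by apply: bigcapT_measurable => n; apply: bigcup_measurable => j _;
    exact: measurable_digit_set.
split; first exact: lebesgue_lim_sup_digit_set.
exact: (eta_series_singular HXmeas HXpos Hlaw Hind m0 pm).
Qed.
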